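(* Let $l$ be a positive integer such that for every $i\in\mathcal{V}$ there exist $l$ matrices in $\mathcal{M}$ (possibly repeated) whose product, in some order, has all entries of its column indexed by $i$ strictly positive, and let $w>0$ be the probability that $W_1=M_1M_2\cdots M_l$ is scrambling (i.e. $\lambda(W_1)<1$). Let $T_k=M_1M_2\cdots M_k$. Then there exist constants $\alpha,\beta$ with $0<\alpha<1$ and $0\le\beta<1$ such that for every $k\ge 8l/w$, with probability greater than $1-\alpha^k$, $\delta(T_k)\le\beta^k$.
   Context: Let $\mathcal{G}=(\mathcal{V},\mathcal{E})$ be a strongly connected directed graph with $\mathcal{V}=\{1,\dots,m\}$, with a self-loop $(i,i)\in\mathcal{E}$ at every node. Let $\mathcal{O}_i=\{j:(i,j)\in\mathcal{E}\}$ and $D_i=|\mathcal{O}_i|$. At each time step $k\ge1$ each link $(i,j)\in\mathcal{E}$ is reliable with probability $q_{ij}\in(0,1]$, independently across links and across time steps; let $X_k[i,j]=1$ if $(i,j)$ is reliable at step $k$ and $0$ otherwise. Let $n=m+|\mathcal{E}|$ and index rows/columns of $n\times n$ matrices by $\mathcal{V}\cup\mathcal{E}$. The random matrix $M_k$ is defined by: for $i\in\mathcal{V}$ and $(i,j)\in\mathcal{E}$, $M_k[i,j]=X_k[i,j]/D_i$ and $M_k[i,(i,j)]=(1-X_k[i,j])/D_i$, all other entries of row $i$ being $0$; for $(i,j)\in\mathcal{E}$, $M_k[(i,j),j]=X_k[i,j]$ and $M_k[(i,j),(i,j)]=1-X_k[i,j]$, all other entries of row $(i,j)$ being $0$. $\mathcal{M}$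 denotes the finite set of all $2^{|\mathcal{E}|}$ matrices obtainable this way. For a row stochastic matrix $A$: $\delta(A)=\max_j\max_{i_1,i_2}|A[i_1,j]-A[i_2,j]|$ and $\lambda(A)=1-\min_{i_1,i_2}\sum_j\min(A[i_1,j],A[i_2,j])$; $A$ is scrambling if $\lambda(A)<1$. *)

From mathcomp Require Import all_boot all_order all_algebra.
From mathcomp Require Import reals.
Set Implicit Arguments. Unset Strict Implicit. Unset Printing Implicit Defensive.
Import Order.TTheory GRing.Theory Num.Theory.
Local Open Scope ring_scope.

Definition edge (m : nat) (e : rel 'I_m) := {p : 'I_m * 'I_m | e p.1 p.2}.

(* Index set V ∪ E of rows/columns. *)
Definition idx (m : nat) (e : rel 'I_m) := ('I_m + edge e)%type.
Definition nidx (m : nat) (e : rel 'I_m) := #|{: idx e}|.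

Definition outdeg (m : nat) (e : rel 'I_m) (i : 'I_m) : nat := #|[set j | e i j]|.

(* A reliability pattern at one time step: X[i,j] for every link. *)
Definition pattern (m : nat) (e : rel 'I_m) := {ffun edge e -> bool}.

Definition b2R (R : realType) (b : bool) : R := if b then 1 else 0.

Definition Mentry (R : realType) (m : nat) (e : rel 'I_m) (X : pattern e)
  (a b : idx e) : R :=
  match a, b with
  | inl i, inl j =>
      match insub (i, j) with
      | Some p => b2R R (X p) / (outdeg e i)%:R
      | None => 0
      end
  | inl i, inr p => if (sval p).1 == i then (1 - b2R R (X p)) / (outdeg e i)%:R else 0
  | inr p, inl j => if (sval p).2 == j then b2R R (X p) else 0
  | inr p, inr p' => if p' == p then 1 - b2R R (X p) else 0
  end.

Definition Mmat (R : realType) (m : nat) (e : rel 'I_m) (X : pattern e)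
  : 'M[R]_(nidx e) :=
  \matrix_(a, b) Mentry R X (enum_val a) (enum_val b).

Definition sample (m : nat) (e : rel 'I_m) (k : nat) := {ffun 'I_k -> pattern e}.

Definition Tprod (R : realType) (m : nat) (e : rel 'I_m) (k : nat) (om : sample e k)
  : 'M[R]_(nidx e) :=
  foldr (fun t acc => Mmat R (om t) *m acc) 1%:M (enum 'I_k).

(* Probability weight of a sample: independent links, independent steps. *)
Definition weight (R : realType) (m : nat) (e : rel 'I_m) (q : edge e -> R)
  (k : nat) (om : sample e k) : R :=
  \prod_(t < k) \prod_(p : edge e) (if om t p then q p else 1 - q p).

Definition prob (R : realType) (m : nat) (e : rel 'I_m) (q : edge e -> R)
  (k : nat) (P : pred (sample e k)) : R :=
  \sum_(om : sample e k | P om) weight q om.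

Definition delta (R : realType) (n : nat) (A : 'M[R]_n) : R :=
  \big[Num.max/0]_(j < n) \big[Num.max/0]_(i1 < n) \big[Num.max/0]_(i2 < n)
     `|A i1 j - A i2 j|.

(* lambda(A) = 1 - min_{i1,i2} sum_j min(A[i1,j], A[i2,j]); for row-stochastic
   A each inner sum is in [0,1], so 1 is a neutral element for this min. *)
Definition lambda (R : realType) (n : nat) (A : 'M[R]_n) : R :=
  1 - \big[Num.min/1]_(i1 < n) \big[Num.min/1]_(i2 < n)
        \sum_(j < n) Num.min (A i1 j) (A i2 j).

Definition scrambling (R : realType) (n : nat) (A : 'M[R]_n) : bool := lambda A < 1.

From HB Require Import structures.
From mathcomp Require Import all_boot all_order all_algebra.
From mathcomp Require Import reals.
From mathcomp Require Import lra zify.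
Set Implicit Arguments. Unset Strict Implicit. Unset Printing Implicit Defensive.
Import Order.TTheory GRing.Theory Num.Theory.
Local Open Scope ring_scope.

(* The coefficient of ergodicity lambda controls delta submultiplicatively:
   delta (A B) <= lambda A * delta B for row-stochastic A.  Cutting the first
   k steps into independent blocks of length l gives
   E[delta T_k] <= rho ^ (k / l) with rho = E[lambda W_1], and rho < 1 since
   W_1 is scrambling with probability w > 0.  Choosing beta < 1 with
   rho <= beta ^ (4 l), Markov's inequality at threshold beta ^ k then bounds
   the probability of delta T_k > beta ^ k by beta ^ k once k >= 8 l. *)

Section PowerBounds.
Variable R : realFieldType.

Lemma bernoulli_ineq n (x : R) : x <= 1 -> 1 - n%:R * x <= (1 - x) ^+ n.
Proof.
move=> x1; elim: n => [|n IH]; first by rewrite mul0r subr0 expr0.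
rewrite exprSr (le_trans _ (ler_wpM2r _ IH)) ?subr_ge0 //.
have n0 : 0 <= n%:R :> R by rewrite ler0n.
rewrite -natr1; nra.
Qed.

Lemma exists_root_ge n (rho : R) :
  0 <= rho -> rho < 1 -> exists2 g : R, 0 < g < 1 & rho <= g ^+ n.
Proof.
move=> rho0 rho1; pose x := (1 - rho) / n.+2%:R.
have xn : x * n.+2%:R = 1 - rho by rewrite divfK // pnatr_eq0.
have x0 : 0 < x by rewrite divr_gt0 ?subr_gt0 ?ltr0Sn.
have n0 : 0 <= n%:R :> R by rewrite ler0n.
rewrite -!natr1 -addrA in xn.
exists (1 - x); first by apply/andP; split; nra.
by apply: le_trans (bernoulli_ineq n (ltW _)); nra.
Qed.

Lemma pow_lt_sq (g : R) (l k : nat) : 0 < g < 1 -> (0 < l)%N ->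
  (8 * l <= k)%N -> (g ^+ (4 * l)) ^+ (k %/ l) < g ^+ k * g ^+ k.
Proof.
case/andP=> g0 g1 l0 lk; have := ltn_ceil k l0.
by rewrite -exprM -exprD ltr_iXn2l //; lia.
Qed.
End PowerBounds.

Section Contraction.
Variables (R : realType) (n : nat).
Implicit Types A B : 'M[R]_n.

Definition row_stochastic A :=
  (forall i j, 0 <= A i j) /\ (forall i, \sum_j A i j = 1).

Lemma row_stochastic1 : row_stochastic 1%:M.
Proof.
split=> [i j|i]; first by rewrite mxE ler0n.
rewrite (bigD1 i) //= big1 ?addr0 ?mxE ?eqxx // => j /negbTE.
by rewrite mxE eq_sym => ->.
Qed.

Lemma row_stochasticM A B :
  row_stochastic A -> row_stochastic B -> row_stochastic (A *m B).
Proof.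
move=> [A0 A1] [B0 B1]; split=> [i j|i].
  by rewrite mxE; apply: sumr_ge0 => k _; rewrite mulr_ge0.
under eq_bigr do rewrite mxE.
rewrite exchange_big /= -(A1 i); apply: eq_bigr => k _.
by rewrite -mulr_sumr B1 mulr1.
Qed.

Lemma row_stochastic_le1 A i j : row_stochastic A -> A i j <= 1.
Proof.
case=> A0 A1; rewrite -(A1 i) (bigD1 j) //= lerDl.
by apply: sumr_ge0 => k _.
Qed.

Lemma delta_ge0 A : 0 <= delta A.
Proof. exact: bigmax_ge_id. Qed.

Lemma ler_delta A i1 i2 j : `|A i1 j - A i2 j| <= delta A.
Proof.
apply: le_trans (le_bigmax _ _ j).
apply: le_trans (le_bigmax _ _ i1).
exact: le_bigmax.
Qed.

Lemma delta_le A t :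
  0 <= t -> (forall i1 i2 j, `|A i1 j - A i2 j| <= t) -> delta A <= t.
Proof.
move=> t0 h; apply: bigmax_le => // j _; apply: bigmax_le => // i1 _.
exact: bigmax_le.
Qed.

Lemma delta_le1 A : row_stochastic A -> delta A <= 1.
Proof.
move=> As; apply: delta_le => // i1 i2 j.
have := row_stochastic_le1 i1 j As; have := row_stochastic_le1 i2 j As.
have [A0 _] := As; have := A0 i1 j; have := A0 i2 j.
rewrite ler_norml; lra.
Qed.

Lemma lambda_ge0 A : 0 <= lambda A.
Proof. by rewrite subr_ge0 bigmin_le_id. Qed.

Lemma lambda_le1 A : row_stochastic A -> lambda A <= 1.
Proof.
case=> A0 _; rewrite lerBlDr lerDl.
apply: le_bigmin => // i1 _; apply: le_bigmin => // i2 _.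
by apply: sumr_ge0 => j _; rewrite le_min !A0.
Qed.

Lemma lambda_ge A i1 i2 : 1 - \sum_j Num.min (A i1 j) (A i2 j) <= lambda A.
Proof. by rewrite lerB // (le_trans (bigmin_le _ i1 _)) ?bigmin_le. Qed.

Lemma ler_wsum_bounds (I : finType) (c b : I -> R) L U :
  (forall k, 0 <= c k) -> (forall k, L <= b k <= U) ->
  (\sum_k c k) * L <= \sum_k c k * b k <= (\sum_k c k) * U.
Proof.
move=> c0 hb; rewrite !mulr_suml; apply/andP; split;
  by apply: ler_sum => k _; apply: ler_wpM2l => //; case/andP: (hb k).
Qed.

(* Seneta's contraction: subtracting the common part min(A i1 k, A i2 k)
   from both rows leaves two weight vectors of the same mass s <= lambda A,
   whose averages of column j of B both lie in the range of that column. *)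
Lemma delta_mulmx_le A B :
  row_stochastic A -> delta (A *m B) <= lambda A * delta B.
Proof.
move=> [A0 A1]; apply: delta_le => [|i1 i2 j].
  by rewrite mulr_ge0 ?lambda_ge0 ?delta_ge0.
pose mn k := Num.min (A i1 k) (A i2 k).
pose s := 1 - \sum_k mn k.
have mass i : \sum_k (A i k - mn k) = s by rewrite sumrB A1.
have c1 k : 0 <= A i1 k - mn k by rewrite subr_ge0 ge_min lexx.
have c2 k : 0 <= A i2 k - mn k by rewrite subr_ge0 ge_min lexx orbT.
pose L := \big[Num.min/B i1 j]_k B k j.
pose U := \big[Num.max/B i1 j]_k B k j.
have LU k : L <= B k j <= U.
  by rewrite (bigmin_le _ k (fun k => B k j)) (le_bigmax _ (fun k => B k j)).
have UL : U - L <= delta B.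
  have close k k' : B k j - delta B <= B k' j.
    by have := ler_delta B k k' j; rewrite ler_norml => /andP[_]; lra.
  rewrite lerBlDr; apply: bigmax_le => [|k _]; rewrite -lerBlDl;
    by apply: le_bigmin => [|k' _]; apply: close.
have split_diff : (A *m B) i1 j - (A *m B) i2 j =
    \sum_k (A i1 k - mn k) * B k j - \sum_k (A i2 k - mn k) * B k j.
  rewrite !mxE; under [X in _ = X - _]eq_bigr do rewrite mulrBl.
  under [X in _ = _ - X]eq_bigr do rewrite mulrBl.
  rewrite !sumrB; lra.
have /andP[lo1 hi1] := ler_wsum_bounds c1 LU.
have /andP[lo2 hi2] := ler_wsum_bounds c2 LU.
rewrite !mass in lo1 hi1 lo2 hi2.
have s0 : 0 <= s by rewrite -(mass i1); apply: sumr_ge0.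
have : s * (U - L) <= lambda A * delta B.
  by apply: ler_pM => //; [case/andP: (LU i1); lra | apply: lambda_ge].
rewrite split_diff ler_norml mulrBr; lra.
Qed.

End Contraction.

Section Transition.
Variables (R : realType) (m : nat) (e : rel 'I_m).
Hypothesis hloop : forall i : 'I_m, e i i.

Lemma sum_insub_edge (i : 'I_m) (G : edge e -> R) :
  \sum_(j : 'I_m) (if insub (i, j) is Some p then G p else 0) =
  \sum_(p : edge e | (sval p).1 == i) G p.
Proof.
rewrite [RHS]big_mkcond /= (eq_bigr (fun p => \sum_(j : 'I_m) (if j == (sval p).2 then
   (if (sval p).1 == i then G p else 0) else 0))); last first.
  by move=> p _; rewrite -big_mkcond big_pred1_eq.
rewrite exchange_big /=; apply: eq_bigr => j _.
case: insubP => [p0 _ p0ij | nij].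
  rewrite (bigD1 p0) //= p0ij !eqxx big1 ?addr0 // => p pp0.
  case: eqP => // pj; case: eqP => // pi; case/eqP: pp0; apply: val_inj.
  by rewrite /= p0ij; case: (sval p) pj pi => a b /= -> ->.
rewrite big1 // => -[[a b] ab] _ /=; case: eqP => // bj; case: eqP => // ai.
by move: nij; rewrite /= bj -ai ab.
Qed.

Lemma outdegE (i : 'I_m) :
  (outdeg e i)%:R = \sum_(p : edge e | (sval p).1 == i) 1 :> R.
Proof.
rewrite -sum_insub_edge (eq_bigr (fun j => if e i j then 1 else 0)); last first.
  by move=> j _; case: insubP => [_ -> _ | /negbTE ->].
by rewrite -big_mkcond sumr_const /outdeg cardsE.
Qed.

Lemma outdeg_gt0 (i : 'I_m) : (0 < outdeg e i)%N.
Proof. by apply/card_gt0P; exists i; rewrite inE hloop. Qed.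

Lemma b2R_ge0 (b : bool) : 0 <= b2R R b.
Proof. by case: b => /=. Qed.

Lemma b2R_le1 (b : bool) : b2R R b <= 1.
Proof. by case: b => /=. Qed.

Lemma Mentry_ge0 (X : pattern e) a b : 0 <= Mentry R X a b.
Proof.
case: a b => [i|p] [j|p'] /=.
- by case: insub => // p; rewrite divr_ge0 ?b2R_ge0.
- by case: ifP => // _; rewrite divr_ge0 // subr_ge0 b2R_le1.
- by case: ifP => // _; rewrite b2R_ge0.
- by case: ifP => // _; rewrite subr_ge0 b2R_le1.
Qed.

Lemma Mentry_row_sum (X : pattern e) a : \sum_b Mentry R X a b = 1.
Proof.
rewrite big_sumType /=; case: a => [i|p] /=.
  have D0 : (outdeg e i)%:R != 0 :> R by rewrite pnatr_eq0 -lt0n outdeg_gt0.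
  rewrite (sum_insub_edge i (fun p => b2R R (X p) / _)) -big_mkcond /= -big_split /=.
  rewrite (eq_bigr (fun _ => 1 / (outdeg e i)%:R)); last first.
    by move=> p _; rewrite -mulrDl addrC subrK.
  by rewrite -mulr_suml -outdegE mulfV.
rewrite -!big_mkcond (big_pred1 (sval p).2) => [|j]; last exact: eq_sym.
by rewrite big_pred1_eq addrC subrK.
Qed.

Lemma Mmat_stochastic (X : pattern e) : row_stochastic (Mmat R X).
Proof.
split=> [a b|a]; first by rewrite mxE Mentry_ge0.
under eq_bigr do rewrite mxE.
by rewrite -(big_enum_val (Mentry R X (enum_val a))) /= Mentry_row_sum.
Qed.

End Transition.

HB.instance Definition _ (R : realType) (n : nat) :=
  Monoid.isLaw.Build 'M[R]_n 1%:M (@mulmx R n n n)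
    (@mulmxA R n n n n) (@mul1mx R n n) (@mulmx1 R n n).

Section Samples.
Variables (R : realType) (m : nat) (e : rel 'I_m) (q : edge e -> R).
Hypothesis hloop : forall i : 'I_m, e i i.
Hypothesis hq : forall p : edge e, 0 < q p <= 1.

Definition sample_cat a b (x : sample e a) (y : sample e b) : sample e (a + b) :=
  [ffun t => match split t with inl i => x i | inr j => y j end].

Lemma sample_catL a b (x : sample e a) (y : sample e b) t :
  sample_cat x y (lshift b t) = x t.
Proof. by rewrite ffunE (unsplitK (inl t) : split (lshift b t) = inl t). Qed.

Lemma sample_catR a b (x : sample e a) (y : sample e b) t :
  sample_cat x y (rshift a t) = y t.
Proof. by rewrite ffunE (unsplitK (inr t) : split (rshift a t) = inr t). Qed.

Lemma sum_sample_cat a b (F : sample e (a + b) -> R) :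
  \sum_(om : sample e (a + b)) F om =
  \sum_(x : sample e a) \sum_(y : sample e b) F (sample_cat x y).
Proof.
rewrite pair_bigA /= (reindex (fun xy => sample_cat xy.1 xy.2)) //.
exists (fun om : sample e (a + b) =>
  ([ffun t => om (lshift b t)], [ffun t => om (rshift a t)]) : sample e a * sample e b).
  move=> [x y] _; congr pair; apply/ffunP => t;
  by rewrite ffunE ?sample_catL ?sample_catR.
move=> om _; apply/ffunP => t /=.
by case: (split_ordP t) => j ->; rewrite ?sample_catL ?sample_catR ffunE.
Qed.

Lemma weight_cat a b (x : sample e a) (y : sample e b) :
  weight q (sample_cat x y) = weight q x * weight q y.
Proof.
rewrite /weight big_split_ord /=.
by congr (_ * _); apply: eq_bigr => t _; rewrite ?sample_catL ?sample_catR.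
Qed.

Lemma weight_ge0 k (om : sample e k) : 0 <= weight q om.
Proof.
apply: prodr_ge0 => t _; apply: prodr_ge0 => p _.
by case: (om t p); case/andP: (hq p) => q0 q1; lra.
Qed.

Lemma sum_weight k : \sum_(om : sample e k) weight q om = 1.
Proof.
rewrite /weight -(bigA_distr_bigA (fun t (X : pattern e) =>
   \prod_p (if X p then q p else 1 - q p))).
apply: big1 => t _.
rewrite -(bigA_distr_bigA (fun p (b : bool) => if b then q p else 1 - q p)).
by apply: big1 => p _; rewrite big_bool /= addrC subrK.
Qed.

Lemma probC k (P : pred (sample e k)) : prob q P + prob q (predC P) = 1.
Proof. by rewrite /prob -(sum_weight k) [RHS](bigID P). Qed.

Lemma prob_ge0 k (P : pred (sample e k)) : 0 <= prob q P.
Proof. by apply: sumr_ge0 => om _; apply: weight_ge0. Qed.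

Lemma prob_le1 k (P : pred (sample e k)) : prob q P <= 1.
Proof. by rewrite -(probC P) lerDl prob_ge0. Qed.

Lemma TprodE k (om : sample e k) :
  Tprod R om = \big[@mulmx R _ _ _/1%:M]_(t < k) Mmat R (om t).
Proof. by rewrite /Tprod /index_enum -enumT unlock. Qed.

Lemma Tprod_cat a b (x : sample e a) (y : sample e b) :
  Tprod R (sample_cat x y) = Tprod R x *m Tprod R y.
Proof.
rewrite !TprodE big_split_ord /=.
by congr mulmx; apply: eq_bigr => t _; rewrite ?sample_catL ?sample_catR.
Qed.

Lemma Tprod_stochastic k (om : sample e k) : row_stochastic (Tprod R om).
Proof.
rewrite TprodE; apply: big_ind => //.
- exact: row_stochastic1.
- exact: row_stochasticM.
- by move=> t _; apply: Mmat_stochastic.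
Qed.

Definition exp_delta k := \sum_(om : sample e k) weight q om * delta (Tprod R om).

Definition exp_lambda l := \sum_(x : sample e l) weight q x * lambda (Tprod R x).

Lemma exp_lambda_ge0 l : 0 <= exp_lambda l.
Proof. by apply: sumr_ge0 => x _; rewrite mulr_ge0 ?weight_ge0 ?lambda_ge0. Qed.

Lemma exp_delta_le1 k : exp_delta k <= 1.
Proof.
rewrite -(sum_weight k); apply: ler_sum => om _.
by apply: ler_piMr; [exact: weight_ge0 | exact/delta_le1/Tprod_stochastic].
Qed.

Lemma exp_delta_cat_le a k : exp_delta (a + k) <= exp_lambda a * exp_delta k.
Proof.
rewrite /exp_delta sum_sample_cat mulr_suml; apply: ler_sum => x _.
rewrite mulr_sumr; apply: ler_sum => y _.
rewrite weight_cat Tprod_cat mulrACA ler_wpM2l ?mulr_ge0 ?weight_ge0 //.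
exact/delta_mulmx_le/Tprod_stochastic.
Qed.

Lemma exp_delta_geometric l N r : exp_delta (N * l + r) <= exp_lambda l ^+ N.
Proof.
elim: N => [|N IH]; first by rewrite mul0n add0n expr0 exp_delta_le1.
rewrite mulSn -addnA exprS (le_trans (exp_delta_cat_le _ _)) //.
by rewrite ler_wpM2l ?exp_lambda_ge0.
Qed.

Lemma exp_lambda_lt1 l :
  0 < prob q (fun x : sample e l => scrambling (Tprod R x)) -> exp_lambda l < 1.
Proof.
set S := fun x : sample e l => scrambling (Tprod R x); set w := prob q S => w0.
pose lmax := \big[Num.max/0]_(x | S x) lambda (Tprod R x).
have lmax1 : lmax < 1 by apply: bigmax_lt.
have : exp_lambda l <= lmax * w + prob q (predC S).
  rewrite /exp_lambda (bigID S) /= lerD //.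
    rewrite /w /prob mulr_sumr; apply: ler_sum => x Sx.
    by rewrite mulrC ler_wpM2r ?weight_ge0 // (le_bigmax_cond _ _ Sx).
  apply: ler_sum => x _.
  by apply: ler_piMr; [exact: weight_ge0 | exact/lambda_le1/Tprod_stochastic].
have := probC S; rewrite -/w; nra.
Qed.

Lemma markov_delta k t :
  t * prob q (fun om : sample e k => t < delta (Tprod R om)) <= exp_delta k.
Proof.
rewrite /prob mulr_sumr /exp_delta [leRHS](bigID (fun om => t < delta (Tprod R om))) /=.
rewrite -[leLHS]addr0 lerD //.
  by apply: ler_sum => om /ltW tlt; rewrite mulrC ler_wpM2l ?weight_ge0.
by apply: sumr_ge0 => om _; rewrite mulr_ge0 ?weight_ge0 ?delta_ge0.
Qed.

Lemma prob_delta_le k t : 0 < t -> exp_delta k < t * t ->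
  1 - t < prob q (fun om : sample e k => delta (Tprod R om) <= t).
Proof.
move=> t0 Et; set good := fun om : sample e k => delta (Tprod R om) <= t.
have bad : prob q (predC good) = prob q (fun om : sample e k => t < delta (Tprod R om)).
  by apply: eq_bigl => om; rewrite /= /good -ltNge.
have := probC good; have := markov_delta k t; rewrite -bad; nra.
Qed.

End Samples.

Theorem lemma2 (R : realType) (m : nat) (e : rel 'I_m) (q : edge e -> R) (l : nat)
  (hm : (0 < m)%N)
  (hloop : forall i : 'I_m, e i i)
  (hconn : forall i j : 'I_m, connect e i j)
  (hq : forall p : edge e, 0 < q p <= 1)
  (hl : (0 < l)%N)
  (hcol : forall i : 'I_m, exists om : sample e l,
      forall a : 'I_(nidx e), 0 < Tprod R om a (enum_rank (inl i : idx e)))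
  (hw : 0 < prob q (fun om : sample e l => scrambling (Tprod R om))) :
  let w := prob q (fun om : sample e l => scrambling (Tprod R om)) in
  exists alpha beta : R,
    [/\ 0 < alpha < 1, 0 <= beta < 1 &
      forall k : nat, 8 * l%:R / w <= k%:R ->
        1 - alpha ^+ k < prob q (fun om : sample e k => delta (Tprod R om) <= beta ^+ k)].
Proof.
move=> w; have rho_lt1 := exp_lambda_lt1 hloop hq hw.
have [g /andP[g0 g1] rho_le] :=
  exists_root_ge (4 * l) (exp_lambda_ge0 hq l) rho_lt1.
exists g, g; split; [by rewrite g0 | by rewrite ltW | move=> k kw].
have lk : (8 * l <= k)%N.
  rewrite -(ler_nat R) natrM (le_trans _ kw) // ler_pdivlMr //.
  by rewrite ler_piMr ?mulr_ge0 ?ler0n ?prob_le1.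
apply: (prob_delta_le hq); first exact: exprn_gt0.
have := exp_delta_geometric hloop hq l (k %/ l) (k %% l); rewrite -divn_eq => Ek.
apply: le_lt_trans Ek (le_lt_trans _ (pow_lt_sq _ hl lk)); last by rewrite g0.
by apply: lerXn2r; rewrite ?nnegrE ?(exp_lambda_ge0 hq) ?exprn_ge0 ?(ltW g0).
Qed.
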